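(* If $[w,n] \in \mathbb{W}$ and $\alpha,\beta \vDash \ell(w)$ have $\mathrm{Peak}(w) = I(\alpha)$ and $\mathrm{Val}(w) = I(\beta)$ then $\Psi_{>|\leq}([w,n]) = K_\alpha$, $\Psi_{<|\geq}([w,n]) = K_\beta$, $\Psi_{\geq|<}([w^{\tt r},n]) = K_{\alpha^{\flat}}$, and $\Psi_{\leq|>}([w^{\tt r},n]) = K_{\beta^{\flat}}$.
   Context: Let $\Bbbk$ be a field (of characteristic not two, so that peak functions make sense as a basis). For a word $w=w_1\cdots w_m$ of positive integers with $\max(w)\le n$, $[w,n]$ is the linear endomorphism of the $\Bbbk$-span of all words sending a word $v$ of length $n$ to $v_{w_1}\cdots v_{w_m}$ and others to $0$; $\mathbb{W}$ is the set of these and $\textbf{W}$ their span, a graded bialgebra (degree $\ell(w)$) with product $[v,m]\otimes[w,n]\mapsto[v\sqcup\!\sqcup(w\uparrow m),m+n]$, coproduct $\Delta_\odot([w,n])=\sum_i[w_1\cdots w_i,n]\otimes[w_{i+1}\cdots w_m,n]$ and counit $1$ on $[\emptyset,n]$, $0$ otherwise. $\zeta_\le,\zeta_\ge,\zeta_<,\zeta_>:\textbf{W}\to\Bbbk$ send $[w,n]$ to $1$ if $w$ is weakly increasing, weakly decreasing, strictly increasing, strictly decreasing respectively, and $0$ otherwise. For $\bullet,\circ$ among these symbols, $\zeta_{\bullet|\circ}=\nabla_\Bbbk\circ(\zeta_\bullet\otimes\zeta_\circ)\circ\Delta_\odot$, and $\Psi_{\bullet|\circ}(x)=\sum_\gamma(\zeta_{\bullet|\circ})_\gamma(x)M_\gamma$,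 where for $\gamma=(\gamma_1,\dots,\gamma_k)$, $(\zeta)_\gamma$ is the iterated coproduct into $\textbf{W}^{\otimes k}$, projection onto degrees $\gamma_1,\dots,\gamma_k$, $\zeta^{\otimes k}$, and multiplication; this is the unique combinatorial bialgebra morphism $(\textbf{W},\zeta_{\bullet|\circ})\to(\textsf{QSym},\zeta_{\textsf{QSym}})$. For $\alpha=(\alpha_1,\dots,\alpha_l)\vDash n$, $I(\alpha)=\{\alpha_1,\dots,\alpha_1+\cdots+\alpha_{l-1}\}$; $\alpha$ is a peak composition if $\alpha_i\ge2$ for $i<l$, and then $K_\alpha=\sum_{\beta\vDash n,\ I(\alpha)\subseteq I(\beta)\cup(I(\beta)+1)}2^{\ell(\beta)}M_\beta$ and $\alpha^\flat=(\alpha_l+1,\alpha_{l-1},\dots,\alpha_2,\alpha_1-1)$. For a word $w$, $w^{\tt r}$ is its reversal, $\mathrm{Peak}(w)=\{i:1<i<\ell(w),\ w_{i-1}\le w_i>w_{i+1}\}$, $\mathrm{Val}(w)=\{i:1<i<\ell(w),\ w_{i-1}\ge w_i<w_{i+1}\}$. *)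

From mathcomp Require Import all_boot all_order all_algebra.
Set Implicit Arguments. Unset Strict Implicit. Unset Printing Implicit Defensive.
Import GRing.Theory.

Definition Wbasis := (seq nat * nat)%type.

Definition in_W (x : Wbasis) : bool := all (fun a => (0 < a) && (a <= x.2)) x.1.

Definition is_composition (g : seq nat) : bool := all (fun a => 0 < a) g.
Definition is_comp (m : nat) (g : seq nat) : bool := is_composition g && (sumn g == m).

Definition Iset (a : seq nat) : seq nat :=
  [seq sumn (take i a) | i <- iota 1 (size a).-1].

(* 1-indexed letters: w_i = nth 0 w (i-1). *)
Definition Peak (w : seq nat) : seq nat :=
  [seq i <- iota 2 (size w - 2) |
     (nth 0 w (i - 2) <= nth 0 w (i - 1)) && (nth 0 w i < nth 0 w (i - 1))].
Definition Val (w : seq nat) : seq nat :=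
  [seq i <- iota 2 (size w - 2) |
     (nth 0 w (i - 1) <= nth 0 w (i - 2)) && (nth 0 w (i - 1) < nth 0 w i)].

(* alpha^flat = (alpha_l + 1, alpha_{l-1}, ..., alpha_2, alpha_1 - 1)
   (for l = 1 this gives (alpha_1); for the empty composition, empty). *)
Definition flat (a : seq nat) : seq nat :=
  match rev a with
  | [::] => [::]
  | x :: t => let u := x.+1 :: t in rcons (take (size u).-1 u) (last 0 u).-1
  end.

(* All ways to write w as a concatenation u_1 ... u_k of k (possibly empty)
   consecutive factors: the terms of the iterated coproduct Delta_odot^{(k)}. *)
Fixpoint splits (k : nat) (w : seq nat) : seq (seq (seq nat)) :=
  match k with
  | 0 => if w is [::] then [:: [::]] else [::]
  | k'.+1 => [seq take i w :: t | i <- iota 0 (size w).+1, t <- splits k' (drop i w)]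
  end.

Section QSymDefs.
Variable F : fieldType.
Local Open Scope ring_scope.

(* An element of QSym, given by its coefficients on the monomial basis M_gamma
   (gamma ranging over compositions). *)
Definition qsym := seq nat -> F.
Definition qsym_eq (f g : qsym) : Prop :=
  forall gam : seq nat, is_composition gam -> f gam = g gam.

Definition zeta (r : rel nat) (x : Wbasis) : F := (sorted r x.1)%:R.

Definition zeta_conv (r s : rel nat) (x : Wbasis) : F :=
  \sum_(p <- splits 2 x.1) zeta r (nth [::] p 0, x.2) * zeta s (nth [::] p 1, x.2).

Definition Psi (r s : rel nat) (x : Wbasis) : qsym :=
  fun gam => \sum_(p <- splits (size gam) x.1 | [seq size u | u <- p] == gam)
               \prod_(u <- p) zeta_conv r s (u, x.2).

Definition Kpeak (a : seq nat) : qsym :=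
  fun gam => if (sumn gam == sumn a) &&
                all (fun s => (s \in Iset gam) || (s \in [seq i.+1 | i <- Iset gam])) (Iset a)
             then 2 ^+ size gam else 0.

End QSymDefs.

From mathcomp Require Import all_boot all_order all_algebra zify.
Set Implicit Arguments. Unset Strict Implicit. Unset Printing Implicit Defensive.
Import GRing.Theory.

(** Let [r] and [s] be complementary relations ([s x y = ~~ r x y]).  For a
   nonempty word [u], [zeta_{r|s}(u)] counts the cut points splitting [u] into
   an [r]-sorted prefix and an [s]-sorted suffix; there are exactly two when
   [u] has no r-valley (an [s]-step followed by an [r]-step) and none
   otherwise.  Since [Psi_{r|s}] evaluates this on the factors of [w] cut at
   [I(gamma)], the coefficient of [M_gamma] is [2^l(gamma)] precisely when
   every r-valley of [w] lies in [I(gamma) \cup (I(gamma)+1)], which is the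
   coefficient of [K_alpha] when the r-valleys of [w] are [I(alpha)].  Peaks
   are [gtn]-valleys and valleys are [ltn]-valleys; reversing [w] turns
   r-valleys into valleys for the reversed complementary relation, at the
   mirrored positions, which form [I(alpha^flat)]. *)

Section Valleys.
Variable r : rel nat.

(* [p] is 1-indexed, as in [Peak]: the letters involved are [u_(p-1) u_p u_(p+1)]. *)
Definition valley (u : seq nat) (p : nat) : bool :=
  [&& 1 < p, p < size u, ~~ r (nth 0 u (p - 2)) (nth 0 u (p - 1))
                       & r (nth 0 u (p - 1)) (nth 0 u p)].

Fixpoint valley_free (u : seq nat) : bool :=
  if u is x :: ((y :: z :: _) as t) then (r x y || ~~ r y z) && valley_free t
  else true.

Lemma valleyE u p :
  valley u p = (p \in [seq i <- iota 2 (size u - 2) |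
                 ~~ r (nth 0 u (i - 2)) (nth 0 u (i - 1)) && r (nth 0 u (i - 1)) (nth 0 u i)]).
Proof. by rewrite mem_filter mem_iota /valley andbC; case: ltnP => /=; case: ltnP; lia. Qed.

Lemma valley_cons x u p : 1 < p -> valley (x :: u) p.+1 = valley u p.
Proof. by case: p => [|[|p]] // _; rewrite /valley /= !subn1 !subn2. Qed.

Lemma valley_take g u p : valley (take g u) p = (p < g) && valley u p.
Proof.
rewrite /valley size_take_min ltn_min; case: (ltnP p g) => hpg; last by rewrite !andbF.
by case: (ltnP 1 p) => // h1; rewrite !nth_take //; lia.
Qed.

Lemma valley_drop g u q : valley (drop g u) q = (1 < q) && valley u (g + q).
Proof.
rewrite /valley size_drop !nth_drop; case: (ltnP 1 q) => //= hq.
have -> : g + (q - 2) = g + q - 2 by lia.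
have -> : g + (q - 1) = g + q - 1 by lia.
by rewrite ltn_subRL (_ : 1 < g + q) //; lia.
Qed.

Lemma valley_freeP u : reflect (forall p, ~~ valley u p) (valley_free u).
Proof.
elim: u => [|x t IH]; first by apply: ReflectT => p; rewrite /valley andbF.
case: t IH => [|y [|z t]] IH.
- by apply: ReflectT => -[|[|p]].
- by apply: ReflectT => -[|[|[|p]]].
rewrite [valley_free _]/=; apply: (iffP andP) => [[hxyz /IH hv]|hv].
  case=> [|[|[|p]]] //; last by rewrite valley_cons.
  by rewrite /valley /= negb_and negbK.
split; first by have := hv 2; rewrite /valley /= negb_and negbK.
by apply/IH => -[|[|p]] //; rewrite -(valley_cons x).
Qed.

Lemma valley_free_cons2 x y t :
  valley_free [:: x, y & t] =
  if r x y then valley_free (y :: t) else sorted (fun a b => ~~ r a b) (y :: t).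
Proof.
case: ifP => hxy; first by case: t => //= z t; rewrite hxy.
elim: t x y hxy => [|z t IH] x y hxy //.
have -> : valley_free [:: x, y, z & t] = (r x y || ~~ r y z) && valley_free [:: y, z & t]
  by [].
by case hyz: (r y z); rewrite hxy ?(IH y z hyz) /= hyz.
Qed.

End Valleys.

Lemma valley_rev (r r' : rel nat) w j : r' =2 (fun x y => ~~ r y x) ->
  valley r' (rev w) j = (j < size w) && valley r w (size w - j).+1.
Proof.
move=> hr; rewrite /valley size_rev.
case: (ltnP 1 j) => h1; case: (ltnP j (size w)) => h2 //=; last first.
  by rewrite [_ < size w](_ : _ = false) ?andbF //; apply/negbTE; lia.
rewrite !nth_rev; try lia.
have -> : size w - (j - 2).+1 = (size w - j).+1 by lia.
have -> : size w - (j - 1).+1 = (size w - j).+1 - 1 by lia.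
have -> : size w - j.+1 = (size w - j).+1 - 2 by lia.
have -> : (size w - j).+1 < size w by lia.
have -> : 1 < (size w - j).+1 by lia.
by rewrite !hr negbK andbC.
Qed.

Lemma count_iota0S (P : pred nat) n :
  count P (iota 0 n.+1) = P 0 + count (P \o succn) (iota 0 n).
Proof. by rewrite /= -[1]/(1 + 0) iotaDl count_map. Qed.

Section SplitCount.
Variables r s : rel nat.
Hypothesis s_compl : s =2 (fun x y => ~~ r x y).

Definition split_count (u : seq nat) : nat :=
  count (fun i => sorted r (take i u) && sorted s (drop i u)) (iota 0 (size u).+1).

Lemma split_count_cons x t :
  split_count (x :: t) =
  sorted s (x :: t) + count (fun i => sorted r (x :: take i t) && sorted s (drop i t))
                            (iota 0 (size t).+1).
Proof. by rewrite /split_count count_iota0S. Qed.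

Lemma split_count_cons2 x y t :
  split_count [:: x, y & t] = if r x y then split_count (y :: t) else 2 * sorted s (y :: t).
Proof.
rewrite split_count_cons [size _]/= count_iota0S [sorted s _]/= s_compl take0 drop0.
case hxy: (r x y); rewrite [X in X + _]/=.
  rewrite add0n split_count_cons; congr (_ + _).
  by apply: eq_count => i; rewrite /= hxy.
rewrite (@eq_count _ _ pred0) ?count_pred0; last by move=> i /=; rewrite hxy.
by rewrite addn0 /= addnn -mul2n.
Qed.

Lemma split_count_valley_free u : u != [::] -> split_count u = 2 * valley_free r u.
Proof.
elim: u => [|x [|y t] IH] // _; rewrite split_count_cons2 valley_free_cons2.
case: (r x y); first exact: IH.
by rewrite /= (eq_path s_compl).
Qed.

End SplitCount.

Definition near_cut (gam : seq nat) (p : nat) : bool :=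
  (p \in Iset gam) || (p \in [seq i.+1 | i <- Iset gam]).

Lemma Iset_cons2 g g' t : Iset [:: g, g' & t] = g :: [seq g + i | i <- Iset (g' :: t)].
Proof.
rewrite /Iset /= addn0; congr (_ :: _).
by rewrite -[2]/(1 + 1) iotaDl -!map_comp; apply: eq_map => i /=; rewrite add0n.
Qed.

Lemma Iset_ge g gam x : x \in Iset (g :: gam) -> g <= x.
Proof. by case/mapP => -[|i] /=; rewrite mem_iota // => _ ->; apply: leq_addr. Qed.

Lemma near_cut_lt g gam p : p < g -> near_cut (g :: gam) p = false.
Proof.
move=> hp; apply/norP; split; first by apply/negP => /Iset_ge; lia.
by apply/negP => /mapP [x /Iset_ge hx hpx]; lia.
Qed.

Lemma near_cut_shift g g' t q : 1 < q -> near_cut [:: g, g' & t] (g + q) = near_cut (g' :: t) q.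
Proof.
move=> hq; rewrite /near_cut Iset_cons2 /= !in_cons.
have -> : (g + q == g) = false by apply/negbTE/eqP; lia.
have -> : (g + q == g.+1) = false by apply/negbTE/eqP; lia.
rewrite (mem_map (@addnI g)) -map_comp (@eq_map _ _ _ (addn g \o succn)) => [|i /=];
  last by rewrite addnS.
by rewrite map_comp (mem_map (@addnI g)).
Qed.

Lemma reshape_valley_freeP r gam w : sumn gam = size w ->
  reflect (forall p, valley r w p -> near_cut gam p) (all (valley_free r) (reshape gam w)).
Proof.
elim: gam w => [|g gam IH] w hs.
  by rewrite (size0nil (esym hs)); apply: ReflectT => p; rewrite /valley andbF.
have hs' : sumn gam = size (drop g w) by rewrite size_drop -hs addKn.
case: gam IH hs hs' => [|g' t] IH hs hs'.
  rewrite /= andbT take_oversize; last by rewrite -hs /= addn0.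
  apply: (iffP (valley_freeP r w)) => H p; first by rewrite (negbTE (H p)).
  by apply/negP => /H.
rewrite [reshape _ _]/= [all _ _]/=; apply: (iffP andP).
- case=> /valley_freeP htake /(IH _ hs') hdrop p hp.
  case: (ltnP p g) => hpg; first by have := htake p; rewrite valley_take hpg hp.
  case: (ltnP g.+1 p) => hpg2; last first.
    have [->|->] : p = g \/ p = g.+1 by lia.
      by rewrite /near_cut Iset_cons2 mem_head.
    by rewrite /near_cut Iset_cons2 /= mem_head orbT.
  have hq : 1 < p - g by lia.
  have hgp : g <= p by lia.
  have := hdrop (p - g); rewrite valley_drop subnKC // hp hq -(near_cut_shift g) // subnKC //.
  by apply.
- move=> H; split.
    apply/valley_freeP => p; rewrite valley_take; case: (ltnP p g) => //= hpg.
    by apply/negP => /H; rewrite near_cut_lt.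
  by apply/(IH _ hs') => q; rewrite valley_drop => /andP [hq /H]; rewrite near_cut_shift.
Qed.

Lemma take_size_belast (y : nat) t : take (size t) (y :: t) = belast y t.
Proof. by elim: t y => //= z t IH y; rewrite IH. Qed.

Lemma flatE a x t : rev a = x :: t -> flat a = rcons (belast x.+1 t) (last x.+1 t).-1.
Proof. by rewrite /flat => ->; rewrite take_size_belast. Qed.

Lemma size_flat a : size (flat a) = size a.
Proof.
rewrite -(size_rev a); case E: (rev a) => [|x t]; first by rewrite /flat E.
by rewrite (flatE E) size_rcons size_belast.
Qed.

Lemma sumn_flat a : is_composition a -> sumn (flat a) = sumn a.
Proof.
case E: (rev a) => [|x t] ha; first by rewrite /flat E -(sumn_rev a) E.
have hl : 0 < last x.+1 t.
  case: t E => [|z t] E //=; move: ha; rewrite /is_composition -all_rev E => /allP; apply.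
  by rewrite inE mem_last orbT.
rewrite (flatE E) -(sumn_rev a) E sumn_rcons.
have := sumn_rcons (belast x.+1 t) (last x.+1 t); rewrite -lastI /=; lia.
Qed.

Lemma sumn_take_flat a i : 0 < i < size a ->
  sumn (take i (flat a)) = (sumn (take i (rev a))).+1.
Proof.
rewrite -(size_rev a); case E: (rev a) => [|x t] /andP [hi0 /= hi] //.
rewrite (flatE E) -cats1 takel_cat ?size_belast //.
rewrite -take_size_belast take_takel /=; last by lia.
by case: i hi0 hi => [|i] //.
Qed.

Lemma Iset_flat a : Iset (flat a) =i [seq (sumn a - i).+1 | i <- Iset a].
Proof.
have sumn_take_rev i : sumn (take i (rev a)) = sumn a - sumn (take (size a - i) a).
  by rewrite take_rev sumn_rev -[X in _ = sumn X - _](cat_take_drop (size a - i)) sumn_cat addKn.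
move=> j; rewrite /Iset size_flat; apply/mapP/mapP => [[i]|[_ /mapP [k hk ->] ->]].
  rewrite mem_iota => hi ->; exists (sumn (take (size a - i) a)).
    by apply/mapP; exists (size a - i) => //; rewrite mem_iota; lia.
  by rewrite sumn_take_flat ?sumn_take_rev //; lia.
move: hk; rewrite mem_iota => hk; exists (size a - k); first by rewrite mem_iota; lia.
by rewrite sumn_take_flat ?sumn_take_rev ?subKn //; lia.
Qed.

Lemma valley_rev_flat (r r' : rel nat) w a : r' =2 (fun x y => ~~ r y x) ->
  sumn a = size w -> (forall p, valley r w p = (p \in Iset a)) ->
  forall p, valley r' (rev w) p = (p \in Iset (flat a)).
Proof.
move=> hr hs hv j; rewrite Iset_flat (valley_rev _ _ hr) hs.
have bnd i : i \in Iset a -> 1 < i < size w by rewrite -hv => /and4P [-> -> _ _].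
apply/idP/mapP => [/andP [hj hb] | [i hi ->]].
  exists (size w - j).+1; first by rewrite -hv.
  by have := bnd _ (etrans (esym (hv _)) hb); lia.
have hib := bnd i hi.
rewrite (_ : (size w - (size w - i).+1).+1 = i) ?hv ?hi ?andbT; lia.
Qed.

Lemma splits1 v : splits 1 v = [:: [:: v]].
Proof.
have -> : splits 1 v =
  [seq take i v :: t | i <- iota 0 (size v).+1, t <- splits 0 (drop i v)] by [].
rewrite -addn1 iotaD allpairs_cat add0n /= drop_size take_size.
rewrite (_ : [seq _ | x <- iota 0 (size v), y <- _] = [::]) //; apply/size0nil.
rewrite size_allpairs_dep.
have /eq_in_map -> : {in iota 0 (size v), (fun i => size (splits 0 (drop i v))) =1 fun=> 0}.
  by move=> i; rewrite mem_iota => /andP [_ hi]; case: (drop i v) (size_drop i v) => [|a l] /=; lia.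
by elim: (iota 0 _).
Qed.

Section Coefficients.
Variable F : fieldType.
Local Open Scope ring_scope.

Lemma zeta_conv_split_count r s u n : zeta_conv F r s (u, n) = (split_count r s u)%:R.
Proof.
rewrite /zeta_conv; have -> : splits 2 u =
  [seq take i u :: t | i <- iota 0 (size u).+1, t <- splits 1 (drop i u)] by [].
rewrite big_allpairs_dep /split_count -sumn_count sumnE big_map natr_sum.
by apply: eq_bigr => i _; rewrite splits1 big_seq1 /zeta -natrM mulnb.
Qed.

Lemma sum_iota_pred1 (R : nmodType) m g (X : nat -> R) :
  \sum_(i <- iota 0 m | i == g) X i = if (g < m)%N then X g else 0.
Proof.
case: ltnP => hg; last by rewrite big_hasC // has_pred1 mem_iota; lia.
by rewrite -big_filter filter_pred1_uniq ?iota_uniq ?mem_iota // big_seq1.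
Qed.

Lemma sum_splits_shape (R : nmodType) gam w (G : seq (seq nat) -> R) :
  \sum_(p <- splits (size gam) w | [seq size u | u <- p] == gam) G p =
  if sumn gam == size w then G (reshape gam w) else 0.
Proof.
elim: gam w G => [|g gam IH] w G.
  by case: w => [|a w]; rewrite /= ?big_cons big_nil /= ?addr0.
have -> : splits (size (g :: gam)) w =
  [seq take i w :: t | i <- iota 0 (size w).+1, t <- splits (size gam) (drop i w)] by [].
rewrite big_mkcond big_allpairs_dep.
transitivity (\sum_(i <- iota 0 (size w).+1)
                if i == g then
                  \sum_(t <- splits (size gam) (drop i w) | [seq size u | u <- t] == gam)
                     G (take i w :: t)
                else 0).
  rewrite !big_seq; apply: eq_bigr => i; rewrite mem_iota => hi.
  case: eqP => [<-|hig].
    by rewrite [RHS]big_mkcond; apply: eq_bigr => t _; rewrite eqseq_cons size_takel ?eqxx //; lia.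
  by rewrite big1 // => t _; rewrite eqseq_cons size_takel ?(introF eqP hig) //; lia.
rewrite -big_mkcond sum_iota_pred1 ltnS IH size_drop /=; case: leqP => hg.
  by rewrite -(eqn_add2l g) subnKC.
by rewrite (_ : (g + _ == _) = false) //; apply/negbTE; lia.
Qed.

Lemma prod_const_if (R : pzSemiRingType) (T : Type) (P : pred T) (c : R) (l : seq T) :
  \prod_(u <- l) (if P u then c else 0) = if all P l then c ^+ size l else 0.
Proof.
elim: l => [|x l IH]; first by rewrite big_nil expr0.
by rewrite big_cons IH /=; case: (P x); case: (all P l); rewrite ?mul0r ?mulr0 ?exprS.
Qed.

Lemma Psi_eq_Kpeak (r s : rel nat) w n a : s =2 (fun x y => ~~ r x y) ->
  sumn a = size w -> (forall p, valley r w p = (p \in Iset a)) ->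
  qsym_eq (Psi F r s (w, n)) (Kpeak F a).
Proof.
move=> hs hsum hv gam hgam; rewrite /Psi /Kpeak sum_splits_shape hsum.
case: eqP => //= hgw.
have -> : all (near_cut gam) (Iset a) = all (valley_free r) (reshape gam w).
  apply/allP/(reshape_valley_freeP r hgw) => H p; first by rewrite hv; apply: H.
  by rewrite -hv; apply: H.
rewrite -(size_reshape gam w) -prod_const_if big_seq [RHS]big_seq.
apply: eq_bigr => u hu; rewrite zeta_conv_split_count (split_count_valley_free hs).
  by case: (valley_free r u).
apply: contraTneq hu => ->; apply/negP => /(map_f size).
by rewrite -[map size _]/(shape _) reshapeKl ?hgw // => /(allP hgam).
Qed.

End Coefficients.

Theorem proposition5p7 (F : fieldType) (hF : (2%:R : F)%R != 0%R)
  (w : seq nat) (n : nat) (hw : in_W (w, n))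
  (alpha beta : seq nat)
  (halpha : is_comp (size w) alpha) (hbeta : is_comp (size w) beta)
  (hPeak : Peak w =i Iset alpha) (hVal : Val w =i Iset beta) :
  [/\ qsym_eq (Psi F gtn leq (w, n)) (Kpeak F alpha),
      qsym_eq (Psi F ltn geq (w, n)) (Kpeak F beta),
      qsym_eq (Psi F geq ltn (rev w, n)) (Kpeak F (flat alpha))
    & qsym_eq (Psi F leq gtn (rev w, n)) (Kpeak F (flat beta))].
Proof.
case/andP: halpha => ha /eqP hsa; case/andP: hbeta => hb /eqP hsb.
have peaks p : valley gtn w p = (p \in Iset alpha).
  by rewrite -hPeak valleyE; congr (_ \in _); apply: eq_filter => i; rewrite /= -leqNgt.
have valleys p : valley ltn w p = (p \in Iset beta).
  by rewrite -hVal valleyE; congr (_ \in _); apply: eq_filter => i; rewrite /= -leqNgt.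
have leqNgtn : leq =2 (fun x y => ~~ gtn x y) by move=> x y; rewrite /= leqNgt.
have geqNltn : geq =2 (fun x y => ~~ ltn x y) by move=> x y; rewrite /= leqNgt.
have ltnNgeq : ltn =2 (fun x y => ~~ geq x y) by move=> x y; rewrite /= ltnNge.
have gtnNleq : gtn =2 (fun x y => ~~ leq x y) by move=> x y; rewrite /= ltnNge.
split.
- exact: Psi_eq_Kpeak leqNgtn hsa peaks.
- exact: Psi_eq_Kpeak geqNltn hsb valleys.
(* [~~ gtn y x] and [~~ ltn y x] are [~~ ltn x y] and [~~ gtn x y] by conversion. *)
- apply: Psi_eq_Kpeak ltnNgeq _ (valley_rev_flat (r := gtn) geqNltn hsa peaks).
  by rewrite sumn_flat // size_rev.
- apply: Psi_eq_Kpeak gtnNleq _ (valley_rev_flat (r := ltn) leqNgtn hsb valleys).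
  by rewrite sumn_flat // size_rev.
Qed.
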